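(* Let $\gamma$ be a gauge on $\mathbb{R}^d$ with skewness $\sigma$. The Fermat–Weber estimator with respect to $\gamma$ has breakdown point exactly $\frac{1}{1+\sigma}$.
   Context: A gauge $\gamma$ on $\mathbb{R}^d$ is the Minkowski functional of a convex compact set $B_\gamma$ with the origin in its interior (not necessarily symmetric); its skewness is $\sigma=\sup_{x\neq0}\gamma(x)/\gamma(-x)$. For a finite set $A$ with positive weights summing to $1$, the Fermat–Weber set $\mathrm{FW}_\gamma(A,w)$ is the set of minimizers of $\sum_{a\in A}w_a\gamma(x-a)$. For $\tau<1$, a $\tau$-corruption of $(A,w)$ is obtained by replacing a subsample $C\subseteq A$ of total weight $w_C\le\tau$ by another finite weighted sample $C'$ of the same total weight. The estimator is $\tau$-robust if for every such $(A,w)$ there is a bounded set $K_\tau$ containing $\mathrm{FW}_\gamma(A')$ for all $\tau$-corruptions $A'$ of $A$. The breakdown point is the supremum of all $\tau$ for which the estimator is $\tau$-robust. *)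

From HB Require Import structures.
From mathcomp Require Import all_boot all_order all_algebra.
From mathcomp Require Import all_classical all_reals all_analysis.
Set Implicit Arguments. Unset Strict Implicit. Unset Printing Implicit Defensive.
Import Order.TTheory GRing.Theory Num.Theory.
Import numFieldNormedType.Exports.
Local Open Scope classical_set_scope.
Local Open Scope ring_scope.

Definition convex_body_set (R : realType) (d : nat) (B : set 'rV[R]_d) : Prop :=
  forall x y (l : R), B x -> B y -> 0 <= l -> l <= 1 -> B (l *: x + (1 - l) *: y).

Definition gauge_body (R : realType) (d : nat) (B : set 'rV[R]_d) : Prop :=
  [/\ convex_body_set B, compact B & interior B 0].

Definition minkowski_gauge (R : realType) (d : nat) (B : set 'rV[R]_d) (x : 'rV[R]_d) : R :=
  inf [set t : R | 0 < t /\ exists2 b, B b & x = t *: b].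

Definition skewness (R : realType) (d : nat) (gam : 'rV[R]_d -> R) : R :=
  sup [set gam x / gam (- x) | x in [set x : 'rV[R]_d | x != 0]].

(* A finite weighted sample: n distinct points a_i with positive weights w_i
   (total weight is imposed separately). *)
Definition weighted_sample (R : realType) (d n : nat)
  (a : 'I_n -> 'rV[R]_d) (w : 'I_n -> R) : Prop :=
  injective a /\ (forall i, 0 < w i).

(* Fermat-Weber objective of the corrupted sample A' = (A \ C) u C'
   (coinciding points have their weights added, which does not change the sum). *)
Definition corrupted_objective (R : realType) (d : nat) (gam : 'rV[R]_d -> R)
  (n : nat) (a : 'I_n -> 'rV[R]_d) (w : 'I_n -> R) (C : {set 'I_n})
  (m : nat) (c : 'I_m -> 'rV[R]_d) (v : 'I_m -> R) (x : 'rV[R]_d) : R :=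
  \sum_(i < n | i \notin C) w i * gam (x - a i) + \sum_(j < m) v j * gam (x - c j).

Definition FW_set (R : realType) (d : nat) (f : 'rV[R]_d -> R) : set 'rV[R]_d :=
  [set x | forall y, f x <= f y].

Definition tau_corruption (R : realType) (d : nat) (tau : R)
  (n : nat) (w : 'I_n -> R) (C : {set 'I_n})
  (m : nat) (c : 'I_m -> 'rV[R]_d) (v : 'I_m -> R) : Prop :=
  [/\ \sum_(i in C) w i <= tau, weighted_sample c v
    & \sum_(j < m) v j = \sum_(i in C) w i].

(* tau-robustness of the Fermat-Weber estimator w.r.t. gam : for every weighted
   sample (A, w) there is a bounded set K (here: a ball of radius M) containing
   FW(A') for every tau-corruption A' of A. *)
Definition tau_robust (R : realType) (d : nat) (gam : 'rV[R]_d -> R) (tau : R) : Prop :=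
  forall (n : nat) (a : 'I_n -> 'rV[R]_d) (w : 'I_n -> R),
    weighted_sample a w -> \sum_(i < n) w i = 1 ->
    exists M : R, forall (C : {set 'I_n}) (m : nat) (c : 'I_m -> 'rV[R]_d) (v : 'I_m -> R),
      tau_corruption tau w C c v ->
      forall x, FW_set (corrupted_objective gam a w C c v) x -> `|x| <= M.

Definition breakdown_point (R : realType) (d : nat) (gam : 'rV[R]_d -> R) : R :=
  sup [set tau : R | tau < 1 /\ tau_robust gam tau].

From HB Require Import structures.
From mathcomp Require Import all_boot all_order all_algebra.
From mathcomp Require Import all_classical all_reals all_analysis.
From mathcomp Require Import ring lra.
Import Order.TTheory GRing.Theory Num.Theory.
Import numFieldNormedType.Exports.
Local Open Scope classical_set_scope.
Local Open Scope ring_scope.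

(* Robustness below the threshold: if tau * (1 + sig) < 1, comparing the
   objective at a minimizer x with its value at 0 and using the triangle
   inequality gives (1 - tau * (1 + sig)) * gam x <= K, with K depending only
   on the clean sample; so all minimizers stay in a fixed ball.

   Breakdown above the threshold: if tau * (1 + sig) > 1, pick u != 0 with
   (1 - tau) * gam (- u) < tau * gam u.  The sample {0, u} with weights
   1 - tau, tau, whose point u is moved to - t u, has minimizers x with
   tau * gam (- x) >= t * (tau * gam u - (1 - tau) * gam (- u)), which is
   unbounded in t.  The two estimates pin the supremum of the robust tau. *)

Lemma lipschitz_continuous (R : realType) (d : nat) (f : 'rV[R]_d -> R) (k : R) :
  0 < k -> (forall x y, `|f x - f y| <= k * `|x - y|) -> continuous f.
Proof.
move=> k0 hf x; apply/(@cvgrPdist_lt _ R^o _ _ (nbhs_filter x)) => e e0.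
apply/nbhs_ballP; exists (e / k) => /=; first by rewrite divr_gt0.
move=> y; rewrite -ball_normE /= => hy.
by apply: le_lt_trans (hf x y) _; rewrite mulrC -ltr_pdivlMr.
Qed.

(* A continuous function exceeding f 0 outside a ball attains its minimum:
   apply the extreme value theorem on the closed ball. *)
Lemma coercive_has_minimizer (R : realType) (d : nat) (f : 'rV[R]_d -> R) (rho : R) :
  continuous f -> 0 < rho -> (forall y, rho < `|y| -> f 0 < f y) ->
  exists c, forall y, f c <= f y.
Proof.
move=> fc rho0 hf.
have in_ball y : closed_ball (0 : 'rV[R]_d) rho y <-> `|y| <= rho.
  by rewrite closed_ballE // /closed_ball_ /= sub0r normrN.
have [c cA hc] : exists2 c, c \in closed_ball (0 : 'rV[R]_d) rho &
    forall t, t \in closed_ball (0 : 'rV[R]_d) rho -> f c <= f t.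
  apply: compact_EVT_min.
  - by exists 0; apply/in_ball; rewrite normr0 ltW.
  - apply: bounded_closed_compact; last exact: closed_ball_closed.
    exists rho; split; first exact: gtr0_real.
    by move=> M hM y /in_ball hy; apply: le_trans hy (ltW hM).
  - by move=> y; apply: continuous_subspaceT.
exists c => y; have [hy|hy] := leP `|y| rho.
  by apply: hc; apply/mem_set/in_ball.
apply: le_trans (ltW (hf _ hy)); apply: hc; apply/mem_set/in_ball.
by rewrite normr0 ltW.
Qed.

Lemma sup_initial_segment (R : realType) (T : set R) (b : R) :
  (forall t, t < b -> T t) -> (forall t, T t -> t <= b) -> sup T = b.
Proof.
move=> below bounded.
have ub : has_ubound T by exists b.
apply/eqP; rewrite eq_le; apply/andP; split.
  apply: ge_sup; last exact: bounded.
  by exists (b - 1); apply: below; rewrite ltrBlDr ltrDl.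
apply/ler_addgt0Pr => e e0.
have : T (b - e) by apply: below; rewrite ltrBlDr ltrDl.
by move/(ub_le_sup ub); lra.
Qed.

Section Gauge.
Variables (R : realType) (d : nat) (B : set 'rV[R]_d).
Hypothesis gaugeB : gauge_body B.

Local Notation gam := (minkowski_gauge B).
Local Notation dilations x := [set t : R | 0 < t /\ exists2 b, B b & x = t *: b].
Local Notation sig := (skewness gam).

Lemma gauge_body_ball : exists2 r : R, 0 < r & forall x, `|x| < r -> B x.
Proof.
case: gaugeB => _ _ /nbhs_ballP [e e0 he]; exists e => // x hx; apply: he.
by rewrite -ball_normE /= sub0r normrN.
Qed.

Lemma gauge_body_bounded : exists2 M : R, 0 < M & forall x, B x -> `|x| <= M.
Proof.
case: gaugeB => _ /compact_bounded /ex_strict_bound_gt0 [M M0 hM] _.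
by exists M => // x /hM /ltW.
Qed.

Lemma large_dilations : exists2 r : R, 0 < r & forall x t, `|x| / r < t -> dilations x t.
Proof.
have [r r0 hr] := gauge_body_ball; exists r => // x t ht.
have t0 : 0 < t by apply: le_lt_trans ht; exact: divr_ge0 (normr_ge0 _) (ltW r0).
split=> //; exists (t^-1 *: x); last by rewrite scalerA mulfV ?gt_eqF // scale1r.
apply: hr; rewrite normrZ gtr0_norm ?invr_gt0 // mulrC ltr_pdivrMr //.
by rewrite mulrC -ltr_pdivrMr.
Qed.

Lemma dilations_nonempty x : dilations x !=set0.
Proof.
have [r r0 hr] := large_dilations; exists (`|x| / r + 1); apply: hr.
by rewrite ltrDl.
Qed.

Lemma dilations_lbound x : has_lbound (dilations x).
Proof. by exists 0 => t [/ltW]. Qed.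

Lemma gauge_ge0 x : 0 <= gam x.
Proof. by apply: lb_le_inf; [exact: dilations_nonempty | move=> t [/ltW]]. Qed.

Lemma gauge_le_dilation x t : dilations x t -> gam x <= t.
Proof. by move=> h; apply: ge_inf => //; exact: dilations_lbound. Qed.

Lemma gauge_le_norm : exists2 r : R, 0 < r & forall x, gam x <= `|x| / r.
Proof.
have [r r0 hr] := large_dilations; exists r => // x.
by apply/ler_addgt0Pr => e e0; apply: gauge_le_dilation; apply: hr; rewrite ltrDl.
Qed.

Lemma norm_le_gauge : exists2 M : R, 0 < M & forall x, `|x| <= M * gam x.
Proof.
have [M M0 hM] := gauge_body_bounded; exists M => // x.
rewrite mulrC -ler_pdivrMr //; apply: lb_le_inf; first exact: dilations_nonempty.
move=> t [t0 [b bB ->]]; rewrite ler_pdivrMr // normrZ gtr0_norm //.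
by rewrite ler_pM2l // hM.
Qed.

Lemma gauge0 : gam 0 = 0.
Proof.
have [r r0 hr] := gauge_le_norm; apply/eqP; rewrite eq_le gauge_ge0 andbT.
by apply: le_trans (hr 0) _; rewrite normr0 mul0r.
Qed.

Lemma gauge_gt0 x : x != 0 -> 0 < gam x.
Proof.
move=> x0; have [M M0 hM] := norm_le_gauge.
have : 0 < M * gam x by apply: lt_le_trans (hM x); rewrite normr_gt0.
by rewrite pmulr_rgt0.
Qed.

(* Subadditivity: convexity of B combines dilations of x and of y. *)
Lemma gauge_subadd x y : gam (x + y) <= gam x + gam y.
Proof.
apply/ler_addgt0Pr => e e0.
have e20 : 0 < e / 2 by rewrite divr_gt0.
have [s [s0 [b bB hb]] hs] :=
  inf_adherent e20 (conj (dilations_nonempty x) (dilations_lbound x)).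
have [s' [s'0 [b' bB' hb']] hs'] :=
  inf_adherent e20 (conj (dilations_nonempty y) (dilations_lbound y)).
have ss0 : 0 < s + s' by rewrite addr_gt0.
have : gam (x + y) <= s + s'.
  apply: gauge_le_dilation; split=> //.
  exists ((s / (s + s')) *: b + (1 - s / (s + s')) *: b').
    case: gaugeB => convB _ _; apply: convB => //.
      by rewrite divr_ge0 // ltW.
    by rewrite ler_pdivrMr // mul1r lerDl ltW.
  by rewrite scalerDr !scalerA hb hb'; congr (_ *: _ + _ *: _); field; rewrite gt_eqF.
rewrite /minkowski_gauge in hs hs' *; lra.
Qed.

Lemma gauge_scale_le x l : 0 < l -> gam (l *: x) <= l * gam x.
Proof.
move=> l0; rewrite mulrC -ler_pdivrMr //.
apply: lb_le_inf; first exact: dilations_nonempty.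
move=> t [t0 [b bB ->]]; rewrite ler_pdivrMr // mulrC; apply: gauge_le_dilation.
by split; [rewrite mulr_gt0 | exists b => //; rewrite scalerA].
Qed.

Lemma gauge_scale x l : 0 < l -> gam (l *: x) = l * gam x.
Proof.
move=> l0; apply/eqP; rewrite eq_le gauge_scale_le //=.
have linv : 0 < l^-1 by rewrite invr_gt0.
have := gauge_scale_le (l *: x) l^-1 linv.
by rewrite scalerA mulVf ?gt_eqF // scale1r -ler_pdivlMl // mulrC.
Qed.

(* Being subadditive and dominated by the norm, gam is Lipschitz. *)
Lemma gauge_lipschitz : exists2 r : R, 0 < r &
  forall x y, `|gam x - gam y| <= `|x - y| / r.
Proof.
have [r r0 hr] := gauge_le_norm; exists r => // x y.
have h1 : gam x <= gam (x - y) + gam y by rewrite -{1}(subrK y x) gauge_subadd.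
have h2 : gam y <= gam (y - x) + gam x by rewrite -{1}(subrK x y) gauge_subadd.
have := hr (x - y); have := hr (y - x); rewrite distrC => h3 h4.
by rewrite ler_norml; apply/andP; split; lra.
Qed.

Lemma sum_gauge_triangle (I : finType) (P : pred I) (w : I -> R) (y : 'rV[R]_d)
    (p q : I -> 'rV[R]_d) : (forall i, P i -> 0 <= w i) ->
  \sum_(i | P i) w i * gam (y - p i)
    <= \sum_(i | P i) w i * gam (y - q i) + \sum_(i | P i) w i * gam (q i - p i).
Proof.
move=> w0; rewrite -big_split; apply: ler_sum => i Pi; rewrite /= -mulrDr.
by rewrite ler_wpM2l ?w0 // -{1}(subrK (q i) y) -addrA gauge_subadd.
Qed.

Local Notation ratios := [set gam x / gam (- x) | x in [set x : 'rV[R]_d | x != 0]].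

Lemma ratios_ubound : has_ubound ratios.
Proof.
have [r r0 hr] := gauge_le_norm; have [M M0 hM] := norm_le_gauge.
exists (M / r) => _ [x /= x0 <-].
have g0 : 0 < gam (- x) by apply: gauge_gt0; rewrite oppr_eq0.
rewrite ler_pdivrMr // mulrAC; apply: le_trans (hr x) _.
by rewrite ler_pM2r ?invr_gt0 // -(normrN x) hM.
Qed.

Lemma ratios_empty : ~ (ratios !=set0) -> sig = 0.
Proof.
move=> S0; rewrite /skewness (_ : ratios = set0) ?sup0 //.
by rewrite predeqE => y; split => // Sy; apply: S0; exists y.
Qed.

Lemma skewness_ge0 : 0 <= sig.
Proof.
have [[y [x x0 _]]|/ratios_empty ->] := pselect (ratios !=set0); last by [].
apply: le_trans (ub_le_sup ratios_ubound (ex_intro2 _ _ x x0 erefl)).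
by rewrite divr_ge0 // gauge_ge0.
Qed.

Lemma gauge_opp_le x : gam (- x) <= sig * gam x.
Proof.
have [->|x0] := eqVneq x 0; first by rewrite oppr0 gauge0 mulr0.
rewrite -ler_pdivrMr ?gauge_gt0 //; apply: ub_le_sup; first exact: ratios_ubound.
by exists (- x); rewrite /= ?oppr_eq0 // opprK.
Qed.

Lemma skewness_gt z : 0 <= z -> z < sig ->
  exists2 u, u != 0 & z < gam u / gam (- u).
Proof.
move=> z0 zs; have [Sne|/ratios_empty S0] := pselect (ratios !=set0).
  by have [_ [u u0 <-] hz] := sup_gt Sne zs; exists u.
by move: zs; rewrite S0 => /(le_lt_trans z0); rewrite ltxx.
Qed.

Lemma corrupted_minimizer_bound (n : nat) (a : 'I_n -> 'rV[R]_d) (w : 'I_n -> R)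
    (C : {set 'I_n}) (m : nat) (c : 'I_m -> 'rV[R]_d) (v : 'I_m -> R) (x : 'rV[R]_d) :
  (forall i, 0 < w i) -> \sum_(i < n) w i = 1 ->
  (forall j, 0 < v j) -> \sum_(j < m) v j = \sum_(i in C) w i ->
  FW_set (corrupted_objective gam a w C c v) x ->
  (1 - (\sum_(i in C) w i) * (1 + sig)) * gam x
    <= \sum_(i < n) w i * (gam (a i) + gam (- a i)).
Proof.
move=> wpos w1 vpos vC xmin; set V := \sum_(i in C) w i.
have w0 i : true -> 0 <= w i by move=> _; exact: ltW.
have clean_weight : \sum_(i < n | i \notin C) w i = 1 - V.
  by rewrite -w1 [in RHS](bigID (mem C)) /= addrC addrK.
have clean_growth : (1 - V) * gam x <= \sum_(i < n | i \notin C) w i * gam (x - a i)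
    + \sum_(i < n | i \notin C) w i * gam (a i).
  have := sum_gauge_triangle _ (fun i => i \notin C) w x (fun=> 0) a (fun i _ => w0 i isT).
  rewrite subr0 -clean_weight mulr_suml.
  by under [X in _ <= _ + X -> _]eq_bigr do rewrite subr0.
have outlier_growth : \sum_(j < m) v j * gam (- c j)
    <= V * gam (- x) + \sum_(j < m) v j * gam (x - c j).
  have := sum_gauge_triangle _ xpredT v 0 c (fun=> x) (fun j _ => ltW (vpos j)).
  rewrite sub0r /V -vC mulr_suml.
  by under [X in X <= _ -> _]eq_bigr do rewrite sub0r.
have clean_le : \sum_(i < n | i \notin C) w i * (gam (a i) + gam (- a i))
    <= \sum_(i < n) w i * (gam (a i) + gam (- a i)).
  rewrite [leRHS](bigID (mem C)) /= lerDr; apply: sumr_ge0 => i _.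
  by rewrite mulr_ge0 ?addr_ge0 ?gauge_ge0 ?w0.
have := xmin 0; rewrite /corrupted_objective.
under [X in _ <= X + _ -> _]eq_bigr do rewrite sub0r.
under [X in _ <= _ + X -> _]eq_bigr do rewrite sub0r.
move: clean_le; under [X in X <= _ -> _]eq_bigr do rewrite mulrDr.
rewrite big_split /= => clean_le.
have V0 : 0 <= V by apply: sumr_ge0 => i _; exact: w0.
have := ler_wpM2l V0 (gauge_opp_le x).
lra.
Qed.

Lemma robust_below tau : tau * (1 + sig) < 1 -> tau_robust gam tau.
Proof.
move=> small n a w [_ wpos] w1.
have [M M0 hM] := norm_le_gauge.
set K := \sum_(i < n) w i * (gam (a i) + gam (- a i)).
have del0 : 0 < 1 - tau * (1 + sig) by rewrite subr_gt0.
exists (M * (K / (1 - tau * (1 + sig)))) => C m c v [hC [_ vpos] vC] x xmin.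
have bound := corrupted_minimizer_bound n a w C m c v x wpos w1 vpos vC xmin.
apply: le_trans (hM x) _; rewrite ler_pM2l // ler_pdivlMr // mulrC.
apply: le_trans bound; apply: ler_wpM2r; first exact: gauge_ge0.
by rewrite lerB // ler_wpM2r // addr_ge0 // skewness_ge0.
Qed.

Definition two_points (u : 'rV[R]_d) (i : 'I_2) : 'rV[R]_d :=
  if val i == 0%N then 0 else u.
Definition two_weights (tau : R) (i : 'I_2) : R :=
  if val i == 0%N then 1 - tau else tau.

Lemma two_point_sample u tau : u != 0 -> 0 < tau < 1 ->
  weighted_sample (two_points u) (two_weights tau) /\
  \sum_(i < 2) two_weights tau i = 1.
Proof.
move=> u0 /andP[tau0 tau1]; split; last first.
  by rewrite !big_ord_recl big_ord0 /two_weights /=; lra.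
split; last by move=> [[|[|i]] hi] //=; rewrite /two_weights /=; lra.
move=> [[|[|i]] hi] [[|[|j]] hj] //= e; try by apply/val_inj.
- by move: u0; rewrite /two_points /= in e; rewrite -e eqxx.
- by move: u0; rewrite /two_points /= in e; rewrite e eqxx.
Qed.

(* Objective obtained by moving the point u to - t u. *)
Definition shifted_objective (tau t : R) (u x : 'rV[R]_d) : R :=
  (1 - tau) * gam x + tau * gam (x + t *: u).

Lemma two_point_corruption u tau t : 0 < tau ->
  let c := fun _ : 'I_1 => - (t *: u) in
  tau_corruption tau (two_weights tau) [set ord_max]%SET c (fun=> tau) /\
  corrupted_objective gam (two_points u) (two_weights tau) [set ord_max]%SET c
    (fun=> tau) = shifted_objective tau t u.
Proof.
move=> tau0 c.
have wC : \sum_(i in [set ord_max]%SET) two_weights tau i = tau.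
  by rewrite (big_pred1 ord_max) // => i; rewrite inE.
split.
  split; [by rewrite wC | split=> // i j _ | by rewrite wC big_ord1].
  by apply/val_inj; rewrite (ord1 i) (ord1 j).
apply/funext => x; rewrite /corrupted_objective big_ord1 /c opprK big_mkcond.
by rewrite !big_ord_recl big_ord0 !inE /= /two_weights /two_points /= subr0 !addr0.
Qed.

(* A convex combination of two translates of gam is Lipschitz, hence continuous. *)
Lemma shifted_objective_continuous tau t u : 0 <= tau <= 1 ->
  continuous (shifted_objective tau t u).
Proof.
move=> /andP[tau0 tau1]; have tau1' : 0 <= 1 - tau by rewrite subr_ge0.
have [r r0 lip] := gauge_lipschitz.
apply: (lipschitz_continuous _ _ _ r^-1); first by rewrite invr_gt0.
move=> x y; have l1 := lip x y; have l2 := lip (x + t *: u) (y + t *: u).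
rewrite opprD addrACA subrr addr0 in l2.
rewrite /shifted_objective.
have -> : (1 - tau) * gam x + tau * gam (x + t *: u)
    - ((1 - tau) * gam y + tau * gam (y + t *: u))
  = (1 - tau) * (gam x - gam y) + tau * (gam (x + t *: u) - gam (y + t *: u)).
  by ring.
apply: le_trans (ler_normD _ _) _.
rewrite !normrM (ger0_norm tau0) (ger0_norm tau1') mulrC.
have := ler_wpM2l tau0 l2; have := ler_wpM2l tau1' l1; lra.
Qed.

(* The shifted objective grows at least like (1 - tau) * gam, so it attains
   its minimum. *)
Lemma shifted_objective_has_minimizer tau t u : 0 < tau < 1 ->
  exists x0, forall y, shifted_objective tau t u x0 <= shifted_objective tau t u y.
Proof.
move=> /andP[tau0 tau1]; set f := shifted_objective tau t u.
have tau1' : 0 < 1 - tau by rewrite subr_gt0.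
have fc : continuous f by apply: shifted_objective_continuous; rewrite ltW ?ltW.
have [M M0 hM] := norm_le_gauge.
have f0 : 0 <= f 0 by rewrite addr_ge0 // mulr_ge0 ?gauge_ge0 ?ltW.
apply: (coercive_has_minimizer _ _ f (M * f 0 / (1 - tau) + 1) fc).
  by rewrite ltr_pwDr // divr_ge0 ?mulr_ge0 // ltW.
move=> y hy; rewrite -(ltr_pM2l M0).
have : (1 - tau) * (M * f 0 / (1 - tau) + 1) < (1 - tau) * `|y| by rewrite ltr_pM2l.
have -> : (1 - tau) * (M * f 0 / (1 - tau) + 1) = M * f 0 + (1 - tau).
  by field; rewrite gt_eqF.
have := ler_wpM2l (ltW tau1') (hM y).
have : 0 <= M * (tau * gam (y + t *: u)) by rewrite !mulr_ge0 ?gauge_ge0 // ltW.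
rewrite /f /shifted_objective; nra.
Qed.

Lemma shifted_minimizer_far tau t u x0 : 0 < tau <= 1 -> 0 < t ->
  (forall y, shifted_objective tau t u x0 <= shifted_objective tau t u y) ->
  t * (tau * gam u - (1 - tau) * gam (- u)) <= tau * gam (- x0).
Proof.
move=> /andP[tau0 tau1] t0 x0min.
have := x0min (- (t *: u)); rewrite /shifted_objective addNr gauge0 mulr0 addr0.
rewrite -scalerN gauge_scale // => at_shift.
have : t * gam u <= gam (x0 + t *: u) + gam (- x0).
  by rewrite -gauge_scale // -{1}(addKr x0 (t *: u)) addrC gauge_subadd.
move/(ler_wpM2l (ltW tau0)) => tri.
have : 0 <= (1 - tau) * gam x0 by rewrite mulr_ge0 ?gauge_ge0 //; lra.
lra.
Qed.

Lemma heavy_direction tau : 0 < tau < 1 -> 1 < tau * (1 + sig) ->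
  exists2 u, u != 0 & (1 - tau) * gam (- u) < tau * gam u.
Proof.
move=> /andP[tau0 tau1] big.
have z0 : 0 <= (1 - tau) / tau by rewrite divr_ge0 //; lra.
have zs : (1 - tau) / tau < sig by rewrite ltr_pdivrMr //; lra.
have [u u0 hu] := skewness_gt _ z0 zs.
have gu := gauge_gt0 u u0; have gmu : 0 < gam (- u) by rewrite gauge_gt0 ?oppr_eq0.
exists u => //.
by move: hu; rewrite ltr_pdivrMr // mulrAC ltr_pdivlMr // [tau * _]mulrC.
Qed.

Lemma not_robust_above tau : 0 < tau < 1 -> 1 < tau * (1 + sig) -> ~ tau_robust gam tau.
Proof.
move=> tau01 big robust; have /andP[tau0 tau1] := tau01.
have [u u0 heavy] := heavy_direction tau tau01 big.
set eps := tau * gam u - (1 - tau) * gam (- u).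
have eps0 : 0 < eps by rewrite subr_gt0.
have [sample w1] := two_point_sample u tau u0 tau01.
have [M hM] := robust 2 _ _ sample w1.
have [r r0 hr] := gauge_le_norm.
set t := tau * `|M| / (r * eps) + 1.
have t0 : 0 < t by rewrite ltr_wpDl // divr_ge0 ?mulr_ge0 // ltW.
have [corrupt objective] := two_point_corruption u tau t tau0.
have [x0 x0min] := shifted_objective_has_minimizer tau t u tau01.
have far : t * eps <= tau * gam (- x0).
  by apply: shifted_minimizer_far x0min; rewrite ?tau0 ?ltW.
have x0M : `|x0| <= M.
  by apply: (hM _ _ _ _ corrupt) => y; rewrite objective; exact: x0min.
have : tau * gam (- x0) <= tau * (`|M| / r).
  rewrite ler_pM2l //; apply: le_trans (hr _) _.
  by rewrite normrN ler_pM2r ?invr_gt0 // (le_trans x0M (ler_norm _)).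
have : t * eps = tau * `|M| / r + eps by rewrite /t; field; rewrite ?gt_eqF.
lra.
Qed.

End Gauge.

Arguments skewness_ge0 {R d B}.
Arguments robust_below {R d B}.
Arguments not_robust_above {R d B}.

Theorem mainTheorem6 (R : realType) (d : nat) (B : set 'rV[R]_d) :
  gauge_body B ->
  breakdown_point (minkowski_gauge B) = 1 / (1 + skewness (minkowski_gauge B)).
Proof.
move=> gaugeB; have s0 := skewness_ge0 gaugeB.
set s := skewness _ in s0 *; have s1 : 0 < 1 + s by lra.
apply: sup_initial_segment => tau.
  move=> below; split.
    by apply: lt_le_trans below _; rewrite ler_pdivrMr // mul1r; lra.
  by apply: (robust_below gaugeB); rewrite -ltr_pdivlMr.
move=> [tau1 robust]; rewrite leNgt; apply/negP => above.
have tau0 : 0 < tau by apply: le_lt_trans above; rewrite divr_ge0 // ltW.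
by apply: (not_robust_above gaugeB tau _ _ robust); rewrite ?tau0 // -ltr_pdivrMr.
Qed.
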